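(* Let $g(x)=F_2(x,x,x)$ for $x\ge0$ and $q(x)=x+\frac{f(x)}{f'(x)}$. If $g$ has no $2$-cycle (no $x\ne y$ in $[0,\infty)$ with $g(x)=y$, $g(y)=x$) and $q(x)>-\frac{h}{b}\left(1+\frac1b\right)$ for all $x\ge0$, then the unique positive equilibrium $\bar x$ of $x_{n+1}=x_nf(x_{n-2})+h$ is globally attracting: every solution with initial values $x_{-2},x_{-1},x_0\ge0$ converges to $\bar x$.
   Context: Let $h>0$ and $f:[0,\infty)\to(0,\infty)$ be differentiable with $f'(x)<0$ for all $x\ge 0$, $\lim_{t\to\infty}tf(t)=0$, and $b:=f(0)$ (so $f\le b$). $F_2(x,y,z)=xf(x)f(y)f(z)+hf(x)f(y)+hf(x)+h$ is the twice-expanded map of $F_0(x,y,z)=xf(z)+h$, and $\bar x$ is the unique solution in $[0,\infty)$ of $x=xf(x)+h$. *)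

From Stdlib Require Import Reals.
Open Scope R_scope.

(* f, restricted to [0,oo), is differentiable with derivative f' there
   (one-sided at 0, since the domain of f is [0,oo)). *)
Definition has_deriv_on_nonneg (f f' : R -> R) : Prop :=
  forall x, 0 <= x ->
    forall eps, 0 < eps -> exists delta, 0 < delta /\
      forall y, 0 <= y -> y <> x -> Rabs (y - x) < delta ->
        Rabs ((f y - f x) / (y - x) - f' x) < eps.

Definition tf_tends_to_0 (f : R -> R) : Prop :=
  forall eps, 0 < eps -> exists M, forall t, M <= t -> Rabs (t * f t) < eps.

Definition F2 (h : R) (f : R -> R) (x y z : R) : R :=
  x * f x * f y * f z + h * f x * f y + h * f x + h.

Definition gmap (h : R) (f : R -> R) (x : R) : R := F2 h f x x x.

Definition qmap (f f' : R -> R) (x : R) : R := x + f x / f' x.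

Definition no_two_cycle (g : R -> R) : Prop :=
  forall x y, 0 <= x -> 0 <= y -> g x = y -> g y = x -> x = y.

(* solution of x_{n+1} = x_n f(x_{n-2}) + h; u k stands for x_{k-2} *)
Definition is_solution (h : R) (f : R -> R) (u : nat -> R) : Prop :=
  0 <= u 0%nat /\ 0 <= u 1%nat /\ 0 <= u 2%nat /\
  forall n, u (n + 3)%nat = u (n + 2)%nat * f (u n) + h.

From Stdlib Require Import Reals Lra Lia Psatz.
From Coquelicot Require Import Coquelicot.
Open Scope R_scope.

(* Since f is decreasing, F2 is decreasing in its last two arguments; the
   bound on q makes it decreasing in the first one too, because
   d/dx F2(x,y,z) = f'(x) (f(y) f(z) q(x) + h (f(y) + 1)) and the second
   factor is positive.  So if all terms from some index on lie in [m, M], then five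
   steps later they lie in [g(M), g(m)].  Starting from the a priori bracket
   [0, g(0)], the iterated brackets have monotone endpoints whose limits
   l <= xbar <= L satisfy g(L) = l and g(l) = L; without 2-cycles l = L. *)

Lemma Rabs_Rmax0_sub_le z x : Rabs (Rmax 0 z - Rmax 0 x) <= Rabs (z - x).
Proof.
  unfold Rmax; destruct (Rle_dec 0 z), (Rle_dec 0 x);
    unfold Rabs; repeat destruct Rcase_abs; lra.
Qed.

Lemma Rabs_sub_le_of_slope (f : R -> R) d p y :
  Rabs ((f y - f p) / (y - p) - d) < 1 -> y <> p ->
  Rabs (f y - f p) <= (Rabs d + 1) * Rabs (y - p).
Proof.
  intros Hslope Hne.
  replace (f y - f p) with ((f y - f p) / (y - p) * (y - p)) by (field; lra).
  rewrite Rabs_mult; apply Rmult_le_compat_r; [apply Rabs_pos|].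
  replace ((f y - f p) / (y - p)) with ((f y - f p) / (y - p) - d + d) by ring.
  eapply Rle_trans; [apply Rabs_triang|]; lra.
Qed.

Lemma Un_cv_const c : Un_cv (fun _ => c) c.
Proof. apply is_lim_seq_Reals, is_lim_seq_const. Qed.

Lemma Un_cv_le_const (a : nat -> R) l c : Un_cv a l -> (forall k, a k <= c) -> l <= c.
Proof. intros Ha Hle; exact (Rle_cv_lim Hle Ha (Un_cv_const c)). Qed.

Lemma Un_cv_ge_const (a : nat -> R) l c : Un_cv a l -> (forall k, c <= a k) -> c <= l.
Proof. intros Ha Hge; exact (Rle_cv_lim Hge (Un_cv_const c) Ha). Qed.

Lemma Un_cv_S (a : nat -> R) l : Un_cv a l -> Un_cv (fun k => a (S k)) l.
Proof.
  intros Ha eps Heps; destruct (Ha eps Heps) as [N HN]; exists N.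
  intros n Hn; apply HN; lia.
Qed.

Lemma Un_cv_squeeze_eventually (a b u : nat -> R) l :
  Un_cv a l -> Un_cv b l ->
  (forall k, exists N, forall n, (N <= n)%nat -> a k <= u n <= b k) ->
  Un_cv u l.
Proof.
  intros Ha Hb Hev eps Heps.
  destruct (Ha eps Heps) as [Ka HKa]; destruct (Hb eps Heps) as [Kb HKb].
  destruct (Hev (Ka + Kb)%nat) as [N HN]; exists N; intros n Hn.
  specialize (HN n Hn).
  specialize (HKa (Ka + Kb)%nat ltac:(lia)); specialize (HKb (Ka + Kb)%nat ltac:(lia)).
  unfold R_dist, Rabs in *; repeat destruct Rcase_abs; lra.
Qed.

Lemma strict_antitone_of_deriv_neg (phi dphi : R -> R) :
  (forall x, continuity_pt phi x) ->
  (forall x, 0 < x -> derivable_pt_lim phi x (dphi x)) ->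
  (forall x, 0 <= x -> dphi x < 0) ->
  forall a b, 0 <= a -> a < b -> phi b < phi a.
Proof.
  intros Hcont Hder Hneg a b Ha Hab.
  destruct (MVT_gen phi a b dphi) as [c [Hc Hmvt]].
  - intros x Hx; rewrite Rmin_left, Rmax_right in Hx by lra.
    apply is_derive_Reals, Hder; lra.
  - intros x _; apply Hcont.
  - rewrite Rmin_left, Rmax_right in Hc by lra.
    assert (dphi c * (b - a) < 0) by (apply Rmult_neg_pos; [apply Hneg|]; lra).
    lra.
Qed.

Section DerivativeOnNonneg.

Variables f f' : R -> R.
Hypothesis hder : has_deriv_on_nonneg f f'.

(* f is only given on [0,oo); extended by f 0 to the negatives it becomes a
   continuous function on R, to which the real-analysis library applies. *)
Lemma continuity_pt_Rmax0 x : continuity_pt (fun t => f (Rmax 0 t)) x.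
Proof.
  intros eps Heps; simpl; unfold R_dist.
  set (p := Rmax 0 x).
  destruct (hder p (Rmax_l 0 x) 1 Rlt_0_1) as [d [Hd Hslope]].
  set (K := Rabs (f' p) + 1).
  assert (HK : 0 < K) by (pose proof (Rabs_pos (f' p)); unfold K; lra).
  exists (Rmin d (eps / K)); split.
  { apply Rmin_pos; [lra | apply Rdiv_lt_0_compat; lra]. }
  intros z [_ Hz].
  pose proof (Rabs_Rmax0_sub_le z x) as Hlip; fold p in Hlip.
  pose proof (Rmin_l d (eps / K)); pose proof (Rmin_r d (eps / K)).
  set (w := Rmax 0 z) in *.
  destruct (Req_dec w p) as [->|Hne].
  { rewrite Rminus_diag, Rabs_R0; lra. }
  eapply Rle_lt_trans.
  { apply (Rabs_sub_le_of_slope f (f' p)); [apply Hslope|]; auto.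
    - apply Rmax_l.
    - lra. }
  fold K; apply Rle_lt_trans with (K * Rabs (z - x)).
  { apply Rmult_le_compat_l; lra. }
  apply Rlt_le_trans with (K * (eps / K)).
  { apply Rmult_lt_compat_l; lra. }
  right; field; lra.
Qed.

Lemma derivable_pt_lim_Rmax0 x :
  0 < x -> derivable_pt_lim (fun t => f (Rmax 0 t)) x (f' x).
Proof.
  intros Hx eps Heps.
  destruct (hder x (Rlt_le _ _ Hx) eps Heps) as [d [Hd Hslope]].
  assert (Hdx : 0 < Rmin d x) by (apply Rmin_pos; lra).
  exists (mkposreal _ Hdx); intros e He Hed; simpl in Hed.
  pose proof (Rmin_l d x); pose proof (Rmin_r d x).
  assert (0 < x + e) by (unfold Rabs in Hed; destruct Rcase_abs; lra).
  rewrite !Rmax_right by lra.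
  specialize (Hslope (x + e) ltac:(lra) ltac:(lra)).
  replace (x + e - x) with e in Hslope by ring.
  apply Hslope; lra.
Qed.

Lemma Un_cv_comp_nonneg (a : nat -> R) l :
  (forall k, 0 <= a k) -> 0 <= l -> Un_cv a l -> Un_cv (fun k => f (a k)) (f l).
Proof.
  intros Ha Hl Hcv.
  pose proof (continuity_seq _ a l (continuity_pt_Rmax0 l) Hcv) as Hext.
  cbv beta in Hext; rewrite Rmax_right in Hext by lra.
  intros eps Heps; destruct (Hext eps Heps) as [N HN]; exists N.
  intros n Hn; specialize (HN n Hn); rewrite Rmax_right in HN by apply Ha.
  exact HN.
Qed.

Hypothesis hneg : forall x, 0 <= x -> f' x < 0.

Lemma f_lt_of_lt a b : 0 <= a -> a < b -> f b < f a.
Proof.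
  intros Ha Hab.
  pose proof (strict_antitone_of_deriv_neg _ f' continuity_pt_Rmax0
                derivable_pt_lim_Rmax0 hneg a b Ha Hab) as H.
  simpl in H; rewrite !Rmax_right in H by lra; exact H.
Qed.

Lemma f_le_of_le a b : 0 <= a -> a <= b -> f b <= f a.
Proof.
  intros Ha [Hab | ->]; [left; apply f_lt_of_lt; auto | lra].
Qed.

End DerivativeOnNonneg.

(* The bound on q is exactly what makes this positive in the worst case
   a = e = b, where a e q + h (a + 1) > - h (b + 1) + h (b + 1). *)
Lemma q_bound_bracket_pos h b a e q :
  0 < h -> 0 < a <= b -> 0 < e <= b -> q > - (h / b) * (1 + 1 / b) ->
  0 < a * e * q + h * (a + 1).
Proof.
  intros Hh Ha He Hq.
  destruct (Rle_lt_dec 0 q) as [Hq0 | Hq0].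
  { assert (0 <= a * e * q) by (apply Rmult_le_pos; [apply Rmult_le_pos|]; lra).
    nra. }
  assert (Hae : a * b * q <= a * e * q).
  { assert (0 <= - (a * q) * (b - e)) by (apply Rmult_le_pos; nra). nra. }
  assert (Hbq : b * (b * q) > - h * b - h).
  { replace (- h * b - h) with (b * (b * (- (h / b) * (1 + 1 / b)))) by (field; lra).
    apply Rmult_gt_compat_l; [lra|]; apply Rmult_gt_compat_l; lra. }
  destruct (Rle_lt_dec 0 (b * q + h)); nra.
Qed.

Lemma F2_le_of_f_le h (f : R -> R) x y z y' z' :
  0 < h -> 0 <= x -> 0 < f x -> 0 < f y -> 0 < f z ->
  f y <= f y' -> f z <= f z' -> F2 h f x y z <= F2 h f x y' z'.
Proof.
  intros Hh Hx Hfx Hfy Hfz Hy Hz; unfold F2.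
  assert (f y * f z <= f y' * f z') by (apply Rmult_le_compat; lra).
  assert (x * f x * (f y * f z) <= x * f x * (f y' * f z')).
  { apply Rmult_le_compat_l; [apply Rmult_le_pos|]; lra. }
  assert (h * f x * f y <= h * f x * f y').
  { apply Rmult_le_compat_l; [apply Rmult_le_pos|]; lra. }
  nra.
Qed.

Section F2Antitone.

Variables (h : R) (f f' : R -> R).
Hypothesis hh : 0 < h.
Hypothesis hfpos : forall x, 0 <= x -> 0 < f x.
Hypothesis hder : has_deriv_on_nonneg f f'.
Hypothesis hneg : forall x, 0 <= x -> f' x < 0.
Hypothesis hq : forall x, 0 <= x -> qmap f f' x > - (h / f 0) * (1 + 1 / f 0).

Lemma F2_nonneg x y z : 0 <= x -> 0 <= y -> 0 <= z -> 0 <= F2 h f x y z.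
Proof.
  intros Hx Hy Hz; unfold F2.
  pose proof (hfpos x Hx); pose proof (hfpos y Hy); pose proof (hfpos z Hz).
  assert (0 <= x * f x * f y * f z) by (repeat apply Rmult_le_pos; lra).
  assert (0 <= h * f x * f y) by (repeat apply Rmult_le_pos; lra).
  assert (0 <= h * f x) by (apply Rmult_le_pos; lra).
  lra.
Qed.

Lemma F2_lt_of_lt_l a b y z :
  0 <= a -> a < b -> 0 <= y -> 0 <= z -> F2 h f b y z < F2 h f a y z.
Proof.
  intros Ha Hab Hy Hz.
  set (fe := fun t => f (Rmax 0 t)).
  set (A := f y * f z); set (B := f y + 1).
  set (phi := (id * fe * fct_cte A + fct_cte h * fe * fct_cte B + fct_cte h)%F).
  assert (Hphi : forall t, 0 <= t -> phi t = F2 h f t y z).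
  { intros t Ht; unfold phi, F2, fe, A, B, plus_fct, mult_fct, fct_cte, id.
    rewrite Rmax_right by lra; ring. }
  assert (Hcont : forall t, continuity_pt phi t).
  { intros t; unfold phi.
    repeat first [ apply continuity_pt_plus | apply continuity_pt_mult
                 | apply continuity_pt_const; intros ?; reflexivity
                 | apply derivable_continuous_pt, derivable_pt_id
                 | apply continuity_pt_Rmax0 with (f' := f'), hder ]. }
  set (dphi := fun t => f' t * (A * qmap f f' t + h * B)).
  assert (Hder : forall t, 0 < t -> derivable_pt_lim phi t (dphi t)).
  { intros t Ht.
    assert (f' t <> 0) by (apply Rlt_not_eq, hneg; lra).
    eapply (eq_ind _ (derivable_pt_lim phi t)).
    - unfold phi.
      repeat first [ apply derivable_pt_lim_plus | apply derivable_pt_lim_mult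
                   | apply derivable_pt_lim_const | apply derivable_pt_lim_id
                   | apply derivable_pt_lim_Rmax0; [exact hder | lra] ].
    - unfold dphi, fe, qmap, fct_cte, id, mult_fct.
      rewrite Rmax_right by lra; field; lra. }
  assert (Hneg : forall t, 0 <= t -> dphi t < 0).
  { intros t Ht.
    assert (Hb : 0 < f 0) by (apply hfpos; lra).
    pose proof (f_le_of_le f f' hder hneg 0 y ltac:(lra) Hy).
    pose proof (f_le_of_le f f' hder hneg 0 z ltac:(lra) Hz).
    pose proof (hfpos y Hy); pose proof (hfpos z Hz).
    pose proof (q_bound_bracket_pos h (f 0) (f y) (f z) (qmap f f' t)
                  hh ltac:(lra) ltac:(lra) (hq t Ht)).
    unfold dphi, A, B; apply Rmult_neg_pos; [apply hneg; lra | nra]. }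
  pose proof (strict_antitone_of_deriv_neg phi dphi Hcont Hder Hneg a b Ha Hab).
  rewrite !Hphi in * by lra; assumption.
Qed.

Lemma F2_le_of_le_l a b y z :
  0 <= a -> a <= b -> 0 <= y -> 0 <= z -> F2 h f b y z <= F2 h f a y z.
Proof.
  intros Ha [Hab | ->] Hy Hz; [left; apply F2_lt_of_lt_l | right]; auto.
Qed.

Lemma F2_le_diag m x y z :
  0 <= m -> m <= x -> m <= y -> m <= z -> F2 h f x y z <= F2 h f m m m.
Proof.
  intros Hm Hx Hy Hz.
  apply Rle_trans with (F2 h f m y z); [apply F2_le_of_le_l; lra|].
  apply F2_le_of_f_le; try apply hfpos; try lra;
    apply (f_le_of_le f f'); auto.
Qed.

Lemma F2_ge_diag M x y z :
  0 <= x <= M -> 0 <= y <= M -> 0 <= z <= M -> F2 h f M M M <= F2 h f x y z.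
Proof.
  intros Hx Hy Hz.
  apply Rle_trans with (F2 h f x M M); [apply F2_le_of_le_l; lra|].
  apply F2_le_of_f_le; try apply hfpos; try lra;
    apply (f_le_of_le f f'); tauto.
Qed.

Lemma gmap_nonneg x : 0 <= x -> 0 <= gmap h f x.
Proof. intros Hx; apply F2_nonneg; assumption. Qed.

Lemma gmap_le_of_le a b : 0 <= a -> a <= b -> gmap h f b <= gmap h f a.
Proof. intros Ha Hab; apply F2_le_diag; lra. Qed.

Lemma gmap_Un_cv (a : nat -> R) l :
  (forall k, 0 <= a k) -> 0 <= l -> Un_cv a l ->
  Un_cv (fun k => gmap h f (a k)) (gmap h f l).
Proof.
  intros Ha Hl Hcv.
  pose proof (Un_cv_comp_nonneg f f' hder a l Ha Hl Hcv) as Hfcv.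
  unfold gmap, F2.
  repeat first [ apply CV_plus | apply CV_mult | exact Hcv | exact Hfcv
               | apply Un_cv_const ].
Qed.

End F2Antitone.

Section Brackets.

Variable g : R -> R.
Hypothesis g_nonneg : forall x, 0 <= x -> 0 <= g x.
Hypothesis g_antitone : forall a b, 0 <= a -> a <= b -> g b <= g a.

Fixpoint brackets (k : nat) : R * R :=
  match k with
  | O => (0, g 0)
  | S k => (g (snd (brackets k)), g (fst (brackets k)))
  end.

Definition lower k := fst (brackets k).
Definition upper k := snd (brackets k).

Lemma lower_S k : lower (S k) = g (upper k).
Proof. reflexivity. Qed.

Lemma upper_S k : upper (S k) = g (lower k).
Proof. reflexivity. Qed.

Lemma brackets_ordered k : 0 <= lower k <= upper k.
Proof.
  induction k as [|k IH].
  - unfold lower, upper; simpl; pose proof (g_nonneg 0 (Rle_refl 0)); lra.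
  - rewrite lower_S, upper_S; split; [apply g_nonneg | apply g_antitone]; lra.
Qed.

Lemma brackets_nested k : lower k <= lower (S k) /\ upper (S k) <= upper k.
Proof.
  induction k as [|k IH].
  - rewrite lower_S, upper_S; unfold lower, upper; simpl.
    pose proof (g_nonneg (g 0) (g_nonneg 0 (Rle_refl 0))); lra.
  - change (g (upper k) <= g (upper (S k)) /\ g (lower (S k)) <= g (lower k)).
    pose proof (brackets_ordered k); pose proof (brackets_ordered (S k)).
    split; apply g_antitone; lra.
Qed.

Variable xbar : R.
Hypothesis xbar_nonneg : 0 <= xbar.
Hypothesis g_xbar : g xbar = xbar.

Lemma brackets_around_fixpoint k : lower k <= xbar <= upper k.
Proof.
  induction k as [|k IH].
  - unfold lower, upper; simpl; rewrite <- g_xbar at 2.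
    split; [lra | apply g_antitone; lra].
  - rewrite lower_S, upper_S, <- g_xbar.
    pose proof (brackets_ordered k).
    split; apply g_antitone; lra.
Qed.

Hypothesis g_Un_cv : forall (a : nat -> R) l,
  (forall k, 0 <= a k) -> 0 <= l -> Un_cv a l -> Un_cv (fun k => g (a k)) (g l).
Hypothesis g_no_two_cycle : no_two_cycle g.

Lemma brackets_cv : Un_cv lower xbar /\ Un_cv upper xbar.
Proof.
  destruct (growing_cv lower) as [l Hl].
  { intros k; apply brackets_nested. }
  { exists xbar; intros x [k ->]; apply brackets_around_fixpoint. }
  destruct (decreasing_cv upper) as [L HL].
  { intros k; apply brackets_nested. }
  { exists (- xbar); intros x [k ->]; unfold opp_seq.
    pose proof (brackets_around_fixpoint k); lra. }
  assert (Hl_le : l <= xbar)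
    by (apply (Un_cv_le_const lower); [assumption | apply brackets_around_fixpoint]).
  assert (Hl_ge : 0 <= l)
    by (apply (Un_cv_ge_const lower); [assumption | apply brackets_ordered]).
  assert (HL_ge : xbar <= L)
    by (apply (Un_cv_ge_const upper); [assumption | apply brackets_around_fixpoint]).
  assert (Hupper_nonneg : forall k, 0 <= upper k)
    by (intros k; pose proof (brackets_ordered k); lra).
  assert (HgL : g L = l).
  { apply (UL_sequence (fun k => lower (S k))); [|apply Un_cv_S; assumption].
    apply (g_Un_cv upper); auto; lra. }
  assert (Hgl : g l = L).
  { apply (UL_sequence (fun k => upper (S k))); [|apply Un_cv_S; assumption].
    apply (g_Un_cv lower); auto; apply brackets_ordered. }
  assert (l = L) by (apply g_no_two_cycle; auto; lra).
  split; [replace xbar with l | replace xbar with L]; auto; lra.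
Qed.

End Brackets.

Lemma gmap_fixpoint h (f : R -> R) x : x = x * f x + h -> gmap h f x = x.
Proof.
  intros Hx; unfold gmap, F2.
  replace (x * f x * f x * f x + h * f x * f x + h * f x + h)
    with (((x * f x + h) * f x + h) * f x + h) by ring.
  rewrite <- !Hx; reflexivity.
Qed.

Section Solution.

Variables (h : R) (f f' : R -> R) (u : nat -> R).
Hypothesis hh : 0 < h.
Hypothesis hfpos : forall x, 0 <= x -> 0 < f x.
Hypothesis hsol : is_solution h f u.

Lemma solution_nonneg n : 0 <= u n.
Proof.
  destruct hsol as [H0 [H1 [H2 Hrec]]].
  enough (Hall : forall n, 0 <= u n /\ 0 <= u (S n) /\ 0 <= u (S (S n)))
    by apply Hall.
  induction n0 as [|n0 [Hn [HSn HSSn]]]; [auto|].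
  repeat split; auto.
  replace (S (S (S n0))) with (n0 + 3)%nat by lia; rewrite Hrec.
  replace (n0 + 2)%nat with (S (S n0)) by lia.
  pose proof (hfpos (u n0) Hn); nra.
Qed.

Lemma solution_F2 n : u (n + 5)%nat = F2 h f (u (n + 2)%nat) (u (n + 1)%nat) (u n).
Proof.
  destruct hsol as [_ [_ [_ Hrec]]].
  replace (n + 5)%nat with (n + 2 + 3)%nat by lia; rewrite Hrec.
  replace (n + 2 + 2)%nat with (n + 1 + 3)%nat by lia; rewrite Hrec.
  replace (n + 1 + 2)%nat with (n + 3)%nat by lia; rewrite Hrec.
  unfold F2; ring.
Qed.

Hypothesis hder : has_deriv_on_nonneg f f'.
Hypothesis hneg : forall x, 0 <= x -> f' x < 0.
Hypothesis hq : forall x, 0 <= x -> qmap f f' x > - (h / f 0) * (1 + 1 / f 0).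

Lemma solution_eventually_in_brackets k : exists N, forall n, (N <= n)%nat ->
  lower (gmap h f) k <= u n <= upper (gmap h f) k.
Proof.
  induction k as [|k [N HN]].
  - exists 5%nat; intros n Hn.
    replace n with (n - 5 + 5)%nat by lia; rewrite solution_F2.
    unfold lower, upper; simpl; split.
    + apply F2_nonneg; auto; apply solution_nonneg.
    + apply (F2_le_diag h f f'); auto; try lra; apply solution_nonneg.
  - exists (N + 5)%nat; intros n Hn.
    replace n with (n - 5 + 5)%nat by lia; rewrite solution_F2, lower_S, upper_S.
    pose proof (HN (n - 5 + 2)%nat ltac:(lia)).
    pose proof (HN (n - 5 + 1)%nat ltac:(lia)).
    pose proof (HN (n - 5)%nat ltac:(lia)).
    pose proof (brackets_ordered (gmap h f) (gmap_nonneg h f hh hfpos)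
                  (gmap_le_of_le h f f' hh hfpos hder hneg hq) k).
    split; [apply (F2_ge_diag h f f') | apply (F2_le_diag h f f')]; auto; lra.
Qed.

End Solution.

Theorem mainTheorem13 (h : R) (f f' : R -> R)
  (hh : 0 < h)
  (hfpos : forall x, 0 <= x -> 0 < f x)
  (hder : has_deriv_on_nonneg f f')
  (hneg : forall x, 0 <= x -> f' x < 0)
  (hlim : tf_tends_to_0 f)
  (hg : no_two_cycle (gmap h f))
  (hq : forall x, 0 <= x -> qmap f f' x > - (h / f 0) * (1 + 1 / f 0)) :
  forall xbar, 0 <= xbar -> xbar = xbar * f xbar + h ->
  forall u : nat -> R, is_solution h f u -> Un_cv u xbar.
Proof.
  intros xbar Hxbar Hfix u Hsol.
  destruct (brackets_cv (gmap h f) (gmap_nonneg h f hh hfpos)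
              (gmap_le_of_le h f f' hh hfpos hder hneg hq) xbar Hxbar
              (gmap_fixpoint h f xbar Hfix) (gmap_Un_cv h f f' hder) hg)
    as [Hlower Hupper].
  apply (Un_cv_squeeze_eventually _ _ u xbar Hlower Hupper).
  apply (solution_eventually_in_brackets h f f'); assumption.
Qed.
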